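(* Fix $\alpha>1$, a Pufferfish scenario $(\mathcal S,\mathcal Q,\Theta)$ and a slice profile $(\mathcal U,\omega)$. If a mechanism $\mathcal M$ satisfies $(\alpha,\epsilon,\omega)$-Ave-SRPP in $(\mathcal S,\mathcal Q,\Theta)$, then for any $\delta\in(0,1)$ it satisfies $(\epsilon',\delta,\omega)$-Ave-SPP in $(\mathcal S,\mathcal Q,\Theta)$ with $\epsilon'=\epsilon+\frac{\log(1/\delta)}{\alpha-1}$.
   Context: Pufferfish scenario: secrets $\mathcal S$, pairs $\mathcal Q\subseteq\mathcal S\times\mathcal S$, priors $\Theta$, each a joint law of secret $S$ and dataset $X$ with secret marginal $P^S_\theta$; $\mathcal M^\theta_s$ is the law of $\mathcal M(X)\in\mathbb R^d$ given $S=s$ under $\theta$. Slice profile: $\mathcal U\subseteq\mathbb S^{d-1}$, $\omega$ a probability measure on the unit sphere supported on $\mathcal U$; $\Psi^u(a)=\langle a,u\rangle$, $\Psi^u_\#$ pushforward. $\mathtt D_\alpha$ is R\'enyi divergence. $\mathcal M$ is $(\alpha,\epsilon,\omega)$-Ave-SRPP if $\int\mathtt D_\alpha(\Psi^u_\#\mathcal M^\theta_{s_i}\|\Psi^u_\#\mathcal M^\theta_{s_j})\,d\omega(u)\le\epsilon$ for all $\theta\in\Theta$ and $(s_i,s_j)\in\mathcal Q$ with $P^S_\theta(s_i),P^S_\theta(s_j)>0$. Approximate max-divergence: $\mathtt D^\delta_\infty(P\|Q)=\inf\{\varepsilon\ge0:\ P(A)\le e^\varepsilon Q(A)+\delta\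 \text{for all measurable }A\}$. $\mathcal M$ is $(\varepsilon,\delta,\omega)$-Ave-SPP if $\int\mathtt D^\delta_\infty(\Psi^u_\#\mathcal M^\theta_{s_i}\|\Psi^u_\#\mathcal M^\theta_{s_j})\,d\omega(u)\le\varepsilon$ for all such $\theta$ and $(s_i,s_j)$. *)

From HB Require Import structures.
From mathcomp Require Import all_boot all_order all_algebra.
From mathcomp Require Import all_classical all_reals all_analysis measurable_realfun.
Set Implicit Arguments. Unset Strict Implicit. Unset Printing Implicit Defensive.
Import Order.TTheory GRing.Theory Num.Theory.
Local Open Scope classical_set_scope.
Local Open Scope ring_scope.

(* R^d is modelled as d.-tuple R with its product (Borel) sigma-algebra. *)

Definition inner (R : realType) (d : nat) (a u : d.-tuple R) : R :=
  \sum_(i < d) tnth a i * tnth u i.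

Definition unit_sphere (R : realType) (d : nat) : set (d.-tuple R) :=
  [set u | \sum_(i < d) tnth u i ^+ 2 = 1].

Definition Psi (R : realType) (d : nat) (u : d.-tuple R) : d.-tuple R -> R :=
  fun a => inner a u.

Lemma measurable_Psi (R : realType) (d : nat) (u : d.-tuple R) :
  measurable_fun [set: d.-tuple R] (Psi u).
Proof.
rewrite /Psi /inner.
have := @measurable_sum _ _ R setT 'I_d (index_enum 'I_d)
  (fun i (a : d.-tuple R) => tnth a i * tnth u i).
apply => i; apply: measurable_funM => //; exact: measurable_tnth.
Qed.

HB.instance Definition _ (R : realType) (d : nat) (u : d.-tuple R) :=
  isMeasurableFun.Build _ _ _ _ (Psi u) (measurable_Psi u).

Definition slice_law (R : realType) (d : nat) (P : probability (d.-tuple R) R)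
  (u : d.-tuple R) : probability R R := distribution P (Psi u).

Local Open Scope ereal_scope.

Definition eln (R : realType) (x : \bar R) : \bar R :=
  match x with
  | r%:E => (ln r)%:E
  | +oo => +oo
  | -oo => -oo
  end.

Definition renyi_div (R : realType) (alpha : R) (P Q : probability R R) : \bar R :=
  if `[< P `<< Q >] then
    ((alpha - 1)^-1)%:E * eln (\int[Q]_x ((Radon_Nikodym (charge_of_finite_measure P) Q x) `^ alpha))
  else +oo.

Definition approx_max_div (R : realType) (delta : R) (P Q : probability R R) : \bar R :=
  ereal_inf [set e%:E | e in [set e : R | (0 <= e)%R /\
     forall A : set R, measurable A -> P A <= (expR e)%:E * Q A + delta%:E]].

Definition slice_profile (R : realType) (d : nat) (U : set (d.-tuple R))
  (omega : probability (d.-tuple R) R) : Prop :=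
  U `<=` @unit_sphere R d /\ omega.-negligible (~` U).

(* Pufferfish scenario (S, Q, Theta): secrets of type S, discriminative
   pairs Qs, priors Theta (indexed by a type Th).  For each prior th:
   PS th s = P^S_th(s) is the prior probability of secret s, and
   M th s = M^th_s is the law of the output M(X) in R^d given S = s. *)

Definition ave_SRPP (R : realType) (d : nat) (S Th : Type) (Qs : set (S * S))
  (Theta : set Th) (PS : Th -> S -> R) (M : Th -> S -> probability (d.-tuple R) R)
  (omega : probability (d.-tuple R) R) (alpha eps : R) : Prop :=
  forall th si sj, Theta th -> Qs (si, sj) -> (0 < PS th si)%R -> (0 < PS th sj)%R ->
    \int[omega]_u renyi_div alpha (slice_law (M th si) u) (slice_law (M th sj) u)
      <= eps%:E.

Definition ave_SPP (R : realType) (d : nat) (S Th : Type) (Qs : set (S * S))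
  (Theta : set Th) (PS : Th -> S -> R) (M : Th -> S -> probability (d.-tuple R) R)
  (omega : probability (d.-tuple R) R) (eps delta : R) : Prop :=
  forall th si sj, Theta th -> Qs (si, sj) -> (0 < PS th si)%R -> (0 < PS th sj)%R ->
    \int[omega]_u approx_max_div delta (slice_law (M th si) u) (slice_law (M th sj) u)
      <= eps%:E.

From HB Require Import structures.
From mathcomp Require Import all_boot all_order all_algebra.
From mathcomp Require Import all_classical all_reals all_analysis.
From mathcomp Require Import measurable_realfun ring lra.
Set Implicit Arguments. Unset Strict Implicit. Unset Printing Implicit Defensive.
Import Order.TTheory GRing.Theory Num.Theory.
Local Open Scope classical_set_scope.
Local Open Scope ring_scope.

(** Fix one slice, let f = dP/dQ and I = \int f^alpha dQ.  The pointwise bound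
    max(t, 0) <= e^eps + e^(-(alpha-1) eps) t^alpha, integrated over A against Q,
    gives P(A) <= e^eps Q(A) + e^(-(alpha-1) eps) I for every eps; the choice
    eps = (log I + log(1/delta)) / (alpha - 1) turns the error term into delta.
    Young's inequality t <= (alpha-1)/alpha + t^alpha/alpha, integrated over the
    whole line, gives I >= 1, so this eps is nonnegative and the Renyi
    divergence is nonnegative.  Hence D^delta_oo <= D_alpha + log(1/delta)/(alpha-1)
    on every slice, and integrating this against omega proves the theorem. *)

Section real_bounds.
Context {R : realType}.

Lemma maxr0_le_young (a t : R) : 1 < a ->
  Num.max t 0 <= (a - 1) / a + a^-1 * t `^ a.
Proof.
move=> a1; have a0 : 0 < a by lra.
have rhs0 : 0 <= (a - 1) / a + a^-1 * t `^ a.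
  by rewrite addr_ge0 ?mulr_ge0 ?divr_ge0 ?invr_ge0 ?powR_ge0 //; lra.
rewrite ge_max rhs0 andbT; have [t0|t0] := leP t 0; first exact: le_trans rhs0.
have q0 : 0 < a / (a - 1) by rewrite divr_gt0 //; lra.
have conj_aq : a^-1 + (a / (a - 1))^-1 = 1 by rewrite invf_div; field; lra.
have := @conjugate_powR R t 1 a _ (ltW t0) ler01 a0 q0 conj_aq.
by rewrite mulr1 powR1 invf_div mul1r addrC [t `^ a / a]mulrC.
Qed.

Lemma maxr0_le_expR_powR (a e t : R) : 1 <= a ->
  Num.max t 0 <= expR e + expR (- ((a - 1) * e)) * t `^ a.
Proof.
move=> a1; have tail0 : 0 <= expR (- ((a - 1) * e)) * t `^ a.
  by rewrite mulr_ge0 ?expR_ge0 ?powR_ge0.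
rewrite ge_max addr_ge0 ?expR_ge0 // andbT.
have [te|et] := leP t (expR e); first by rewrite ler_wpDr.
have t0 : 0 < t by apply: lt_trans et; exact: expR_gt0.
apply: ler_wpDl; first exact: expR_ge0.
rewrite /powR gt_eqF // -expRD -[leLHS]lnK ?posrE // ler_expR.
have e_lnt : e < ln t by rewrite -ltr_expR lnK ?posrE.
have : 0 <= (a - 1) * (ln t - e) by rewrite mulr_ge0 // subr_ge0; lra.
by rewrite mulrBr; lra.
Qed.

End real_bounds.

Section nonneg_integral.
Local Open Scope ereal_scope.
Import HBNNSimple.
Context d (T : measurableType d) (R : realType).
Variable mu : {measure set T -> \bar R}.

(* The integral of a nonnegative function is a supremum over simple minorants,
   so neither lemma needs measurability. *)
Lemma ge0_le_integral_nonmeasurable (f g : T -> \bar R) :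
  (forall x, 0 <= f x) -> (forall x, f x <= g x) ->
  \int[mu]_x f x <= \int[mu]_x g x.
Proof.
move=> f0 fg; have g0 x : 0 <= g x by exact: le_trans (f0 x) (fg x).
rewrite !ge0_integralTE //; apply: ereal_sup_le => _ [h hf <-].
by exists h => // x; exact: le_trans (hf x) (fg x).
Qed.

Lemma ge0_integralD_cst_le (g : T -> \bar R) (c : R) :
  (forall x, 0 <= g x) -> (0 <= c)%R ->
  \int[mu]_x (g x + c%:E) <= \int[mu]_x g x + c%:E * mu setT.
Proof.
move=> g0 c0; rewrite ge0_integralTE; last by move=> x; rewrite adde_ge0.
apply: ge_ereal_sup => _ [h hgc <-].
have -> : sintegral mu h = \int[mu]_x (h x)%:E.
  by rewrite integral_nnsfun // patch_setT.
pose k x := Num.max (h x - c)%R 0%R.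
have k0 x : 0 <= (k x)%:E by rewrite lee_fin le_max lexx orbT.
have mk : measurable_fun setT (EFin \o k).
  by apply/measurable_EFinP/measurable_maxr => //; exact: measurable_funB.
have k_le_g x : (k x)%:E <= g x.
  rewrite /k; have [//|_] := leP (h x - c)%R 0%R.
  by rewrite EFinB leeBlDr //; exact: hgc.
apply: (@le_trans _ _ (\int[mu]_x ((k x)%:E + c%:E))).
  apply: ge0_le_integral => //.
  - by move=> x _; rewrite lee_fin.
  - exact/measurable_EFinP.
  - exact: emeasurable_funD.
  - by move=> x _; rewrite -EFinD lee_fin -lerBlDr le_max lexx.
rewrite ge0_integralD // integral_cst // leeD2r ?fin_numM //.
exact: ge0_le_integral_nonmeasurable.
Qed.

End nonneg_integral.

Section renyi_moment.
Local Open Scope ereal_scope.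
Context d (T : measurableType d) (R : realType).
Implicit Types (P Q : probability T R) (a : R).

Definition renyi_moment a P Q : \bar R :=
  \int[Q]_x (Radon_Nikodym (charge_of_finite_measure P) Q x) `^ a.

Lemma renyi_moment_ge0 a P Q : 0 <= renyi_moment a P Q.
Proof. by apply: integral_ge0 => x _; exact: poweR_ge0. Qed.

Lemma measure_le_renyi_moment a P Q (A : set T) (b0 b1 : R) :
  P `<< Q -> measurable A -> (0 <= b0)%R -> (0 <= b1)%R ->
  (forall t : R, Num.max t 0 <= b0 + b1 * t `^ a)%R ->
  P A <= b0%:E * Q A + b1%:E * renyi_moment a P Q.
Proof.
move=> PQ mA b00 b10 bound; rewrite /renyi_moment.
set f := Radon_Nikodym _ Q.
have PQ' : charge_of_finite_measure P `<< Q by [].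
have fin x : f x \is a fin_num by exact: Radon_Nikodym_fin_num.
have mf : measurable_fun setT f.
  exact: measurable_int (Radon_Nikodym_integrable PQ').
have mfa : measurable_fun setT (fun x => f x `^ a).
  exact: measurableT_comp (measurable_poweR _) mf.
have fa0 x : 0 <= f x `^ a by exact: poweR_ge0.
have -> : P A = \int[Q]_(x in A) f x by have := Radon_Nikodym_integral PQ' mA.
apply: (@le_trans _ _ (\int[Q]_(x in A) f^\+ x)).
  by rewrite integralE -[leRHS]sube0 leeB // integral_ge0.
apply: (@le_trans _ _ (\int[Q]_(x in A) (b0%:E + b1%:E * f x `^ a))).
  apply: ge0_le_integral => //.
  - by apply: measurable_funTS; exact: measurable_funepos.
  - by apply/measurable_funTS/emeasurable_funD => //; exact: emeasurable_funM.
  move=> x _; rewrite funeposE -(fineK (fin x)) poweR_EFin -EFinM -EFinD.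
  by rewrite -EFin_max lee_fin.
rewrite ge0_integralD //; last 2 first.
- by move=> x _; rewrite mule_ge0.
- by apply: measurable_funTS; exact: emeasurable_funM.
rewrite integral_cst // ge0_integralZl_EFin //; last exact: measurable_funTS.
by rewrite leeD2l // lee_wpmul2l ?lee_fin // ge0_subset_integral.
Qed.

Lemma renyi_moment_ge1 a P Q : (1 < a)%R -> P `<< Q -> 1 <= renyi_moment a P Q.
Proof.
move=> a1 PQ; have a0 : (0 < a)%R by lra.
have b0 : (0 <= (a - 1) / a)%R by rewrite divr_ge0 //; lra.
have b1 : (0 <= a^-1)%R by rewrite invr_ge0 ltW.
have := measure_le_renyi_moment PQ measurableT b0 b1 (fun t => maxr0_le_young t a1).
rewrite !probability_setT mule1.
have := renyi_moment_ge0 a P Q.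
case: renyi_moment => [r _|_ _|//]; last exact: leey.
rewrite -EFinM -EFinD !lee_fin.
have -> : ((a - 1) / a + a^-1 * r = 1 + (r - 1) / a)%R by field; lra.
by rewrite lerDl pmulr_lge0 ?invr_gt0 // subr_ge0.
Qed.

End renyi_moment.

Section divergences.
Local Open Scope ereal_scope.
Context {R : realType}.
Implicit Types (P Q : probability R R) (a delta : R).

Lemma renyi_divE a P Q : renyi_div a P Q =
  if `[< P `<< Q >] then ((a - 1)^-1)%:E * eln (renyi_moment a P Q) else +oo.
Proof. by []. Qed.

Lemma renyi_div_ge0 a P Q : (1 < a)%R -> 0 <= renyi_div a P Q.
Proof.
move=> a1; rewrite renyi_divE; case: asboolP => [PQ|_]; last exact: le0y.
have a10 : (0 < a - 1)%R by lra.
have := renyi_moment_ge1 a1 PQ; case: renyi_moment => [r| |//] r1 /=.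
  by rewrite mule_ge0 // lee_fin ?invr_ge0 ?ln_ge0 -?lee_fin // ltW.
by rewrite gt0_muley ?lte_fin ?invr_gt0.
Qed.

Lemma approx_max_div_ge0 delta P Q : 0 <= approx_max_div delta P Q.
Proof. by apply: le_ereal_inf_tmp => _ [e [e0 _] <-]; rewrite lee_fin. Qed.

Lemma approx_max_div_le delta P Q (e : R) : (0 <= e)%R ->
  (forall A, measurable A -> P A <= (expR e)%:E * Q A + delta%:E) ->
  approx_max_div delta P Q <= e%:E.
Proof. by move=> e0 PQ; apply: ereal_inf_lbound; exists e. Qed.

Lemma approx_max_div_le_renyi a delta P Q : (1 < a)%R -> (0 < delta < 1)%R ->
  approx_max_div delta P Q <= renyi_div a P Q + (ln (1 / delta) / (a - 1))%:E.
Proof.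
move=> a1 /andP[delta0 delta1]; have a10 : (0 < a - 1)%R by lra.
rewrite renyi_divE; case: asboolP => [PQ|_]; last by rewrite addye // leey.
have tail e A : measurable A ->
    P A <= (expR e)%:E * Q A + (expR (- ((a - 1) * e)))%:E * renyi_moment a P Q.
  move=> mA; apply: measure_le_renyi_moment; rewrite ?expR_ge0 //.
  by move=> t; apply: maxr0_le_expR_powR; exact: ltW.
move: tail (renyi_moment_ge1 a1 PQ).
case: renyi_moment => [r| |//] tail; rewrite ?lee_fin => r1 /=; last first.
  by rewrite gt0_muley ?lte_fin ?invr_gt0 // addye // leey.
have lnr0 : (0 <= ln r)%R by exact: ln_ge0.
have lndelta : (0 < ln (1 / delta))%R by rewrite ln_gt0 // div1r invf_gt1.
rewrite -EFinM -EFinD; set e := (_ + _)%R.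
have e0 : (0 <= e)%R.
  by apply: addr_ge0; [apply: mulr_ge0 | apply: divr_ge0]; rewrite ?invr_ge0; lra.
have err_delta : (expR (- ((a - 1) * e)) * r = delta)%R.
  rewrite -[in X in (_ * X)%R](lnK (x := r)) ?posrE -?expRD; last by lra.
  have -> : (- ((a - 1) * e) + ln r = ln delta)%R.
    by rewrite /e div1r lnV ?posrE //; field; lra.
  by rewrite lnK // posrE.
apply: approx_max_div_le => // A mA; apply: le_trans (tail e A mA) _.
by rewrite -EFinM err_delta.
Qed.

End divergences.

Theorem theorem8 (R : realType) (d : nat) (S Th : Type) (Qs : set (S * S))
  (Theta : set Th) (PS : Th -> S -> R)
  (M : Th -> S -> probability (d.-tuple R) R)
  (U : set (d.-tuple R)) (omega : probability (d.-tuple R) R)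
  (alpha eps : R) :
  1 < alpha ->
  slice_profile U omega ->
  ave_SRPP Qs Theta PS M omega alpha eps ->
  forall delta : R, 0 < delta < 1 ->
    ave_SPP Qs Theta PS M omega (eps + ln (1 / delta) / (alpha - 1)) delta.
Proof.
(* The bound holds slice by slice. *)
move=> alpha1 _ SRPP delta delta01 th si sj Theta_th Qij PSi PSj.
have /andP[delta0 delta1] := delta01.
set c := ln (1 / delta) / (alpha - 1).
have c0 : 0 <= c by rewrite divr_ge0 ?ln_ge0 ?div1r ?invf_ge1 //; lra.
set renyi := fun u => renyi_div alpha (slice_law (M th si) u) (slice_law (M th sj) u).
apply: (@le_trans _ _ (\int[omega]_u (renyi u + c%:E))%E).
  apply: ge0_le_integral_nonmeasurable => u; first exact: approx_max_div_ge0.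
  exact: approx_max_div_le_renyi.
apply: le_trans (ge0_integralD_cst_le _ _ c0) _.
  by move=> u; exact: renyi_div_ge0.
have -> : (c%:E * omega setT = c%:E)%E by rewrite probability_setT mule1.
by rewrite EFinD leeD2r // SRPP.
Qed.
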